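(* Let $(L_i)_{i\in I}$ be a family of lattices with zero such that $L_i\cap L_j=\{0\}$ for all distinct $i,j\in I$, and let $L=\coprod^0_{i\in I}L_i$, with each $L_i$ identified with its canonical copy in $L$; put $P=\bigcup_{i\in I}L_i\subseteq L$. Adjoin a new largest element $\infty$ to $L$ and set $\overline{L}_i=L_i\cup\{\infty\}$. Then for each $x\in L$ and each $i\in I$ there exist a largest element $x_{(i)}$ of $L_i$ below $x$ and a least element $x^{(i)}$ of $\overline{L}_i$ above $x$ (with respect to the ordering of $L\cup\{\infty\}$), and for all $x,y\in L$ and $i\in I$: (a) $p_{(i)}=p^{(i)}=p$ if $p\in L_i$; (b) $p_{(i)}=0$ and $p^{(i)}=\infty$ if $p\in P\setminus L_i$; (c) $(x\vee y)_{(i)}=x_{(i)}\vee y_{(i)}$ and $(x\wedge y)_{(i)}=x_{(i)}\wedge y_{(i)}$; (d) $(x\vee y)^{(i)}=x^{(i)}\vee y^{(i)}$; (e) $(x\wedge y)^{(i)}=0$ if $x^{(j)}\wedge y^{(j)}=0$ for some $j\in I$, and $(x\wedge y)^{(i)}=x^{(i)}\wedge y^{(i)}$ otherwise. (Joins and meets on the right-hand sides are computed in $\overline{L}_i$, where $\infty$ is the top element.)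
   Context: $\coprod^0_{i\in I}L_i$ denotes the coproduct of a family of lattices with zero in the category of lattices with zero and zero-preserving lattice homomorphisms; the canonical maps $L_i\to L$ are embeddings and identify the zeros of all $L_i$. *)

From HB Require Import structures.
From mathcomp Require Import all_boot all_order.
Set Implicit Arguments. Unset Strict Implicit. Unset Printing Implicit Defensive.
Import Order.Theory.
Local Open Scope order_scope.

Definition hom0 (d1 d2 : Order.disp_t) (A : bLatticeType d1) (B : bLatticeType d2)
  (f : A -> B) : Prop :=
  [/\ f \bot = \bot,
      forall a b, f (a `|` b) = f a `|` f b &
      forall a b, f (a `&` b) = f a `&` f b].

Definition is_coproduct0 (I : Type) (d : I -> Order.disp_t)
  (Li : forall i, bLatticeType (d i)) (dL : Order.disp_t) (L : bLatticeType dL)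
  (e : forall i, Li i -> L) : Prop :=
  (forall i, hom0 (e i)) /\
  forall (dK : Order.disp_t) (K : bLatticeType dK) (f : forall i, Li i -> K),
    (forall i, hom0 (f i)) ->
    (exists g : L -> K, hom0 g /\ forall i a, g (e i a) = f i a) /\
    (forall g1 g2 : L -> K,
        hom0 g1 -> (forall i a, g1 (e i a) = f i a) ->
        hom0 g2 -> (forall i a, g2 (e i a) = f i a) ->
        forall x, g1 x = g2 x).

(* \overline{L}_i = L_i \cup {oo} is modelled by option, with None = oo (top). *)
Definition ole (d : Order.disp_t) (A : bLatticeType d) (u v : option A) : bool :=
  match u, v with
  | _, None => true
  | None, Some _ => false
  | Some a, Some b => (a <= b)
  end.

Definition ojoin (d : Order.disp_t) (A : bLatticeType d) (u v : option A) : option A :=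
  match u, v with
  | Some a, Some b => Some (a `|` b)
  | _, _ => None
  end.

Definition omeet (d : Order.disp_t) (A : bLatticeType d) (u v : option A) : option A :=
  match u, v with
  | Some a, Some b => Some (a `&` b)
  | Some a, None => Some a
  | None, v => v
  end.

Definition le_bar (d dL : Order.disp_t) (A : bLatticeType d) (L : bLatticeType dL)
  (e : A -> L) (x : L) (u : option A) : bool :=
  match u with None => true | Some a => (x <= e a) end.

Definition is_lower (d dL : Order.disp_t) (A : bLatticeType d) (L : bLatticeType dL)
  (e : A -> L) (x : L) (a : A) : Prop :=
  e a <= x /\ forall b : A, e b <= x -> b <= a.

Definition is_upper (d dL : Order.disp_t) (A : bLatticeType d) (L : bLatticeType dL)
  (e : A -> L) (x : L) (u : option A) : Prop :=
  le_bar e x u /\ forall v : option A, le_bar e x v -> ole u v.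

From HB Require Import structures.
From mathcomp Require Import all_boot all_order.
From mathcomp Require Import boolp.
Set Implicit Arguments. Unset Strict Implicit. Unset Printing Implicit Defensive.
Import Order.Theory.
Local Open Scope order_scope.

(* By the universal property, L is generated by the L_i under joins and meets,
   which gives an induction principle.  The lower projection x_(i) is the image
   of x under the zero-preserving homomorphism L -> L_i that is the identity on
   L_i and zero on every other L_j: by induction it lies below x, and as it
   retracts onto L_i it dominates every element of L_i below x.
   For the upper projections, send a in L_j to the family of prod_i bar(L_i)
   that is a at j and oo elsewhere.  Identifying all families with a zero entry
   with 0 turns the product into a lattice K in which this assignment is a
   zero-preserving homomorphism; its extension F : L -> K satisfies
   x^(i) = F(x)_i, and (d), (e) are the join and the meet of K. *)

Lemma hom0_homo (d1 d2 : Order.disp_t) (A : bLatticeType d1) (B : bLatticeType d2)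
  (f : A -> B) : hom0 f -> {homo f : x y / x <= y}.
Proof. by case=> _ fU _ x y; rewrite !leEjoin -fU => /eqP ->. Qed.

Section Sublattice.
Variables (d : Order.disp_t) (L : bLatticeType d) (S : pred L).
Hypotheses (SI : meet_closed S) (SU : join_closed S) (S0 : \bot \in S).

(* The closure proofs are parameters so that the instances below are found for
   every such [S]. *)
Definition sublattice of meet_closed S & join_closed S & \bot \in S := {x : L | S x}.
Local Notation sub := (sublattice SI SU S0).

HB.instance Definition _ := [isSub of sub for sval].
HB.instance Definition _ := [Choice of sub by <:].
HB.instance Definition _ := Order.SubChoice_isBSubLattice.Build d L S d sub SI SU S0.
End Sublattice.

Section Bar.
Variables (d : Order.disp_t) (A : bLatticeType d).

Definition obar : Type := option A.
HB.instance Definition _ := Choice.on obar.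

Lemma ole_refl : reflexive (@ole d A). Proof. by case=> /=. Qed.
Lemma ole_anti : antisymmetric (@ole d A).
Proof. by case=> [a|] [b|] //= /le_anti ->. Qed.
Lemma ole_trans : transitive (@ole d A).
Proof. by case=> [b|] [a|] [c|] //=; apply: le_trans. Qed.

HB.instance Definition _ := Order.Le_isPOrder.Build d obar ole_refl ole_anti ole_trans.

Lemma leoE (u v : obar) : (u <= v) = ole u v. Proof. by []. Qed.

Lemma omeetP (u v w : obar) : (u <= omeet v w :> obar) = (u <= v) && (u <= w).
Proof. by rewrite !leoE; case: u v w => [a|] [b|] [c|] //=; rewrite ?lexI ?andbT ?andbF. Qed.
Lemma ojoinP (u v w : obar) : (ojoin u v <= w :> obar) = (u <= w) && (v <= w).
Proof. by rewrite !leoE; case: u v w => [a|] [b|] [c|] //=; rewrite ?leUx ?andbT ?andbF. Qed.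

HB.instance Definition _ := Order.POrder_MeetJoin_isLattice.Build d obar omeetP ojoinP.

Lemma le0o (u : obar) : (Some \bot : obar) <= u.
Proof. by rewrite leoE; case: u => //= a; rewrite le0x. Qed.
Lemma leo1 (u : obar) : u <= (None : obar). Proof. by rewrite leoE; case: u. Qed.

Lemma join_some (a b : A) : (Some a : obar) `|` Some b = Some (a `|` b).
Proof. by []. Qed.
Lemma meet_some (a b : A) : (Some a : obar) `&` Some b = Some (a `&` b).
Proof. by []. Qed.

HB.instance Definition _ := Order.hasBottom.Build d obar le0o.
HB.instance Definition _ := Order.hasTop.Build d obar leo1.
End Bar.

Section LeBar.
Variables (d dL : Order.disp_t) (A : bLatticeType d) (L : bLatticeType dL) (f : A -> L).
Hypothesis f_hom : hom0 f.

Lemma le_bar0 x : le_bar f x (\bot : obar A) = (x <= \bot).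
Proof. by case: f_hom => f0 _ _ /=; rewrite f0. Qed.

Lemma le_barU x y (u v : obar A) :
  le_bar f x u -> le_bar f y v -> le_bar f (x `|` y) (u `|` v).
Proof.
case: f_hom => _ fU _; case: u v => [a|] [b|] //= xa yb.
by rewrite fU leUx !lexU2 ?xa ?yb ?orbT.
Qed.

Lemma le_barI x y (u v : obar A) :
  le_bar f x u -> le_bar f y v -> le_bar f (x `&` y) (u `&` v).
Proof.
case: f_hom => _ _ fI; case: u v => [a|] [b|] //= xa yb.
- by rewrite fI lexI !leIx2 ?xa ?yb ?orbT.
- by rewrite leIx2 ?xa.
- by rewrite leIx2 ?yb ?orbT.
Qed.
End LeBar.

Lemma is_lower_unique (d dL : Order.disp_t) (A : bLatticeType d) (L : bLatticeType dL)
  (f : A -> L) x a b : is_lower f x a -> is_lower f x b -> a = b.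
Proof. by case=> fa aM [fb bM]; apply: le_anti; rewrite bM // aM. Qed.

Lemma is_upper_unique (d dL : Order.disp_t) (A : bLatticeType d) (L : bLatticeType dL)
  (f : A -> L) x u v : is_upper f x u -> is_upper f x v -> u = v.
Proof. by case=> fu uM [fv vM]; apply: (@ole_anti _ A); rewrite vM // uM. Qed.

Section CollapsedProduct.
Variables (I : Type) (d : I -> Order.disp_t) (Li : forall i, bLatticeType (d i)).

Definition bar_family := forall i, obar (Li i).

Definition has_zero (f : bar_family) : Prop := exists i, f i = \bot.

Definition collapse (f : bar_family) : bar_family :=
  if `[< has_zero f >] then fun=> \bot else f.

Lemma collapse_id f : ~ has_zero f -> collapse f = f.
Proof. by move=> f0; rewrite /collapse asboolF. Qed.

Lemma collapse_zero f : has_zero f -> collapse f = fun=> \bot.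
Proof. by move=> f0; rewrite /collapse asboolT. Qed.

Lemma collapse0 : collapse (fun=> \bot) = fun=> \bot.
Proof. by rewrite /collapse; case: ifP. Qed.

Lemma collapse_idem f : collapse (collapse f) = collapse f.
Proof.
have [f0|f0] := pselect (has_zero f); last by rewrite !collapse_id.
by rewrite (collapse_zero f0) collapse0.
Qed.

(* K = {0} + prod_i (bar(L_i) minus 0): joins are pointwise, and a pointwise
   meet with a zero entry collapses to the zero family. *)
Definition barprod := {f : bar_family | collapse f == f}.
HB.instance Definition _ := [isSub of barprod for sval].
HB.instance Definition _ := [Choice of barprod by <:].

Definition barprod_of (f : bar_family) : barprod :=
  exist _ (collapse f) (introT eqP (collapse_idem f)).

Lemma val_barprod_of f : val (barprod_of f) = collapse f. Proof. by []. Qed.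

Lemma barprod_zero (x : barprod) : has_zero (val x) -> val x = fun=> \bot.
Proof. by move=> x0; rewrite -(eqP (valP x)) collapse_zero. Qed.

Lemma barprod_le_zero (x : barprod) (f : bar_family) i :
  (forall k, val x k <= f k) -> f i = \bot -> val x = fun=> \bot.
Proof. by move=> xf fi; apply: barprod_zero; exists i; apply/eqP; rewrite -lex0 -fi. Qed.

Definition barprod_le (x y : barprod) := `[< forall i, val x i <= val y i >].

Lemma barprod_le_refl : reflexive barprod_le.
Proof. by move=> x; apply/asboolP. Qed.

Lemma barprod_le_anti : antisymmetric barprod_le.
Proof.
move=> x y /andP[/asboolP xy /asboolP yx]; apply: val_inj.
by apply: functional_extensionality_dep => i; apply: le_anti; rewrite xy yx.
Qed.

Lemma barprod_le_trans : transitive barprod_le.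
Proof. by move=> y x z /asboolP xy /asboolP yz; apply/asboolP => i; apply: le_trans (yz i). Qed.

HB.instance Definition _ := Order.Le_isPOrder.Build (Order.Disp tt tt) barprod
  barprod_le_refl barprod_le_anti barprod_le_trans.

Lemma barprod_leP (x y : barprod) : reflect (forall i, val x i <= val y i) (x <= y).
Proof. exact: asboolP. Qed.

Definition barprod_join (x y : barprod) := barprod_of (fun i => val x i `|` val y i).
Definition barprod_meet (x y : barprod) := barprod_of (fun i => val x i `&` val y i).

Lemma val_barprod_join x y : val (barprod_join x y) = fun i => val x i `|` val y i.
Proof.
rewrite val_barprod_of; set j := fun i => _.
have [[i ji]|j_nz] := pselect (has_zero j); last exact: collapse_id.
rewrite collapse_zero; last by exists i.
move/eqP: ji; rewrite join_eq0 => /andP[/eqP x0 /eqP y0].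
apply: functional_extensionality_dep => k.
by rewrite /j (barprod_zero (ex_intro _ i x0)) (barprod_zero (ex_intro _ i y0)) joinxx.
Qed.

Lemma barprod_joinP (x y z : barprod) : (barprod_join x y <= z) = (x <= z) && (y <= z).
Proof.
apply/barprod_leP/andP; rewrite val_barprod_join.
- by move=> xyz; split; apply/barprod_leP => i; move: (xyz i); rewrite leUx => /andP[].
- by move=> [/barprod_leP xz /barprod_leP yz] i; rewrite leUx xz yz.
Qed.

Lemma barprod_meetP (x y z : barprod) : (x <= barprod_meet y z) = (x <= y) && (x <= z).
Proof.
rewrite /barprod_meet; set m := fun i => _.
have [[i mi0]|m_nz] := pselect (has_zero m); last first.
  apply/barprod_leP/andP; rewrite val_barprod_of collapse_id //.
  - by move=> xm; split; apply/barprod_leP => i; move: (xm i); rewrite lexI => /andP[].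
  - by move=> [/barprod_leP xy /barprod_leP xz] i; rewrite lexI xy xz.
apply/barprod_leP/andP; rewrite val_barprod_of (collapse_zero (ex_intro _ i mi0)).
- move=> x0; have {}x0 := barprod_le_zero (i := i) x0 erefl.
  by split; apply/barprod_leP => k; rewrite x0 le0x.
- move=> [/barprod_leP xy /barprod_leP xz] k.
  by rewrite (@barprod_le_zero x m i) // => l; rewrite lexI xy xz.
Qed.

HB.instance Definition _ :=
  Order.POrder_MeetJoin_isLattice.Build _ barprod barprod_meetP barprod_joinP.

Lemma barprod_le0 (x : barprod) : barprod_of (fun=> \bot) <= x.
Proof. by apply/barprod_leP => i; rewrite val_barprod_of collapse0 le0x. Qed.

HB.instance Definition _ := Order.hasBottom.Build _ barprod barprod_le0.

Lemma val_barprod0 : val (\bot : barprod) = fun=> \bot.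
Proof. exact: collapse0. Qed.

Lemma val_barprod_meet (x y : barprod) : val (x `&` y) = collapse (fun i => val x i `&` val y i).
Proof. by []. Qed.

Definition bar_single j (a : Li j) : bar_family :=
  dfwith (fun k : {classic I} => \top : obar (Li k)) (Some a : obar (Li j)).

Definition barprod_single j (a : Li j) : barprod := barprod_of (bar_single a).

Lemma has_zero_single j (a : Li j) : has_zero (bar_single a) -> a = \bot.
Proof.
case=> i; rewrite /bar_single; have [<-|ji] := eqVneq (j : {classic I}) i.
  by rewrite dfwith_in => -[].
by rewrite dfwith_out.
Qed.

Lemma val_barprod_single j (a : Li j) : a != \bot -> val (barprod_single a) = bar_single a.
Proof. by move=> a0; apply: collapse_id => /has_zero_single/eqP; apply/negP. Qed.

Lemma barprod_single0 j : barprod_single (\bot : Li j) = \bot.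
Proof.
apply: val_inj; rewrite val_barprod0 val_barprod_of collapse_zero //.
by exists j; rewrite /bar_single dfwith_in.
Qed.

Lemma val_barprod_single_in j (a : Li j) : val (barprod_single a) j = Some a.
Proof.
have [->|a0] := eqVneq a \bot; first by rewrite barprod_single0 val_barprod0.
by rewrite val_barprod_single // /bar_single dfwith_in.
Qed.

Lemma val_barprod_single_out i j (a : Li j) :
  a != \bot -> j != i :> {classic I} -> val (barprod_single a) i = None.
Proof. by move=> a0 ji; rewrite val_barprod_single // /bar_single dfwith_out. Qed.

Lemma barprod_single_hom0 j : hom0 (@barprod_single j).
Proof.
split=> [|a b|a b]; first exact: barprod_single0.
- have [->|a0] := eqVneq a \bot; first by rewrite barprod_single0 !join0x.
  have [->|b0] := eqVneq b \bot; first by rewrite barprod_single0 !joinx0.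
  have ab0 : a `|` b != \bot by rewrite join_eq0 negb_and a0.
  apply: val_inj; rewrite val_barprod_join !val_barprod_single //.
  apply: functional_extensionality_dep => i; rewrite /bar_single.
  have [<-|ji] := eqVneq (j : {classic I}) i; last by rewrite !dfwith_out.
  by rewrite !dfwith_in join_some.
- have [->|a0] := eqVneq a \bot; first by rewrite meet0x barprod_single0 meet0x.
  have [->|b0] := eqVneq b \bot; first by rewrite meetx0 barprod_single0 meetx0.
  apply: val_inj; rewrite val_barprod_meet (val_barprod_single a0) (val_barprod_single b0).
  congr (collapse _).
  apply: functional_extensionality_dep => i; rewrite /bar_single.
  have [<-|ji] := eqVneq (j : {classic I}) i; last by rewrite !dfwith_out.
  by rewrite !dfwith_in meet_some.
Qed.
End CollapsedProduct.

Section Coproduct.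
Variables (I : Type) (d : I -> Order.disp_t) (Li : forall i, bLatticeType (d i))
  (dL : Order.disp_t) (L : bLatticeType dL) (e : forall i, Li i -> L).
Arguments e : clear implicits.
Hypothesis e_coprod : is_coproduct0 e.

Let e_hom0 i : hom0 (e i) := proj1 e_coprod i.

Let e0 i : e i \bot = \bot. Proof. by case: (e_hom0 i). Qed.

Lemma coproduct0_ind (P : L -> Prop) :
  P \bot -> (forall x y, P x -> P y -> P (x `|` y)) ->
  (forall x y, P x -> P y -> P (x `&` y)) -> (forall i a, P (e i a)) -> forall x, P x.
Proof.
move=> P0 PU PI Pe x.
pose S : pred L := fun x => `[< P x >].
have SI : meet_closed S by move=> y z /asboolP Py /asboolP Pz; apply/asboolP/PI.
have SU : join_closed S by move=> y z /asboolP Py /asboolP Pz; apply/asboolP/PU.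
have S0 : \bot \in S by apply/asboolP.
pose f i a : sublattice SI SU S0 := exist _ (e i a) (asboolT (Pe i a)).
have f_hom0 i : hom0 (f i).
  by case: (e_hom0 i) => _ eU eI; split=> *; apply: val_inj; rewrite /= ?e0 ?eU ?eI.
have [[g [g_hom0 gf]] _] := (proj2 e_coprod) _ _ f f_hom0.
have val_g_hom0 : hom0 (fun y => val (g y)).
  by case: g_hom0 => g0 gU gI; split=> *; rewrite ?g0 ?gU ?gI.
have id_hom0 : hom0 (@id L) by [].
have [_ e_unique] := proj2 e_coprod _ _ e e_hom0.
(* [val \o g] agrees with [id] on the generators, hence everywhere, and it lands in [S]. *)
rewrite -(e_unique _ _ val_g_hom0 _ id_hom0 (fun _ _ => erefl) x); last by move=> i a; rewrite gf.
exact/asboolP/(valP (g x)).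
Qed.

Definition proj i j (a : Li j) : Li i := dfwith (fun k : {classic I} => \bot : Li k) a i.

Lemma proj_id i (a : Li i) : proj i a = a.
Proof. exact: dfwith_in. Qed.

Lemma proj_out i j (a : Li j) : j != i :> {classic I} -> proj i a = \bot.
Proof. exact: dfwith_out. Qed.

Lemma proj_hom0 i j : hom0 (@proj i j).
Proof.
have [<-|ji] := eqVneq (j : {classic I}) i.
  by split=> *; rewrite !proj_id.
by split=> *; rewrite !proj_out ?joinxx ?meetxx.
Qed.

Lemma is_lower_hom0 i (g : L -> Li i) :
  hom0 g -> (forall j a, g (e j a) = proj i a) -> forall x, is_lower (e i) x (g x).
Proof.
move=> g_hom0 ge x; split; last first.
  by move=> b /(hom0_homo g_hom0); rewrite ge proj_id.
case: g_hom0 (e_hom0 i) => g0 gU gI [_ eU eI].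
elim/coproduct0_ind: x => [|x y xP yP|x y xP yP|j a].
- by rewrite g0 e0.
- by rewrite gU eU leUx !lexU2 ?xP ?yP ?orbT.
- by rewrite gI eI lexI !leIx2 ?xP ?yP ?orbT.
- rewrite ge; have [<-|ji] := eqVneq (j : {classic I}) i; first by rewrite proj_id.
  by rewrite proj_out // e0 le0x.
Qed.

Lemma lower_projection i : exists2 g : L -> Li i,
  hom0 g & (forall j a, g (e j a) = proj i a) /\ forall x, is_lower (e i) x (g x).
Proof.
have [[g [g_hom0 ge]] _] := proj2 e_coprod _ _ _ (fun j => @proj_hom0 i j).
by exists g => //; split=> //; apply: is_lower_hom0.
Qed.

Lemma is_upper_hom0 (F : L -> barprod Li) :
  hom0 F -> (forall j a, F (e j a) = barprod_single a) ->
  forall i x, is_upper (e i) x (val (F x) i).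
Proof.
move=> F_hom0 Fe i x; split; last first.
  case=> [b xb|_]; rewrite -leoE ?lex1 //.
  have /barprod_leP/(_ i) := hom0_homo F_hom0 xb.
  by rewrite Fe val_barprod_single_in.
case: F_hom0 => F0 FU FI; move: i.
elim/coproduct0_ind: x => [i|x y xP yP i|x y xP yP i|j a i].
- by rewrite F0 val_barprod0 le_bar0.
- by rewrite FU val_barprod_join; apply: le_barU.
- rewrite FI val_barprod_meet; set m := fun k => _.
  have [[k mk0]|m_nz] := pselect (has_zero m); last by rewrite collapse_id //; apply: le_barI.
  rewrite (collapse_zero (ex_intro _ k mk0)) le_bar0 //.
  by have := le_barI (e_hom0 k) (xP k) (yP k); rewrite -/(m k) mk0 le_bar0.
- rewrite Fe; have [->|a0] := eqVneq a \bot.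
    by rewrite barprod_single0 val_barprod0 le_bar0 // e0.
  have [<-|ji] := eqVneq (j : {classic I}) i; first by rewrite val_barprod_single_in /=.
  by rewrite val_barprod_single_out.
Qed.

Lemma upper_projection : exists2 F : L -> barprod Li,
  hom0 F & (forall j a, F (e j a) = barprod_single a) /\
           forall i x, is_upper (e i) x (val (F x) i).
Proof.
have [[F [F_hom0 Fe]] _] := proj2 e_coprod _ _ _ (@barprod_single_hom0 _ _ Li).
by exists F => //; split=> //; apply: is_upper_hom0.
Qed.

Lemma is_lower_family_hom0 (low : forall i, L -> Li i) :
  (forall i x, is_lower (e i) x (low i x)) ->
  forall i, hom0 (low i) /\ forall j a, low i (e j a) = proj i a.
Proof.
move=> lowP i; have [g g_hom0 [ge gP]] := lower_projection i.
suff -> : low i = g by [].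
by apply: functional_extensionality_dep => x; apply: is_lower_unique (lowP i x) (gP x).
Qed.

Lemma is_upper_family_factor (up : forall i, L -> option (Li i)) :
  (forall i x, is_upper (e i) x (up i x)) ->
  exists2 F : L -> barprod Li, hom0 F &
    (forall j a, F (e j a) = barprod_single a) /\ up = fun i x => val (F x) i.
Proof.
move=> upP; have [F F_hom0 [Fe FP]] := upper_projection.
exists F => //; split=> //; do 2!apply: functional_extensionality_dep => ?.
exact: is_upper_unique (upP _ _) (FP _ _).
Qed.
End Coproduct.

Theorem lemma4p1 (I : Type) (d : I -> Order.disp_t)
  (Li : forall i, bLatticeType (d i)) (dL : Order.disp_t) (L : bLatticeType dL)
  (e : forall i, Li i -> L)
  (Hcop : @is_coproduct0 I d Li dL L e)
  (Hinj : forall i, injective (e i))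
  (Hdisj : forall i j (a : Li i) (b : Li j), i <> j -> e i a = e j b -> a = \bot) :
  (forall i (x : L), exists a : Li i, is_lower (e i) x a) /\
  (forall i (x : L), exists u : option (Li i), is_upper (e i) x u) /\
  (forall (low : forall i, L -> Li i) (up : forall i, L -> option (Li i)),
     (forall i x, is_lower (e i) x (low i x)) ->
     (forall i x, is_upper (e i) x (up i x)) ->
     (* (a) *)
     (forall i (a : Li i), low i (e i a) = a /\ up i (e i a) = Some a) /\
     (* (b) *)
     (forall i j (a : Li j), (forall b : Li i, e i b <> e j a) ->
        low i (e j a) = \bot /\ up i (e j a) = None) /\
     (* (c) *)
     (forall i (x y : L), low i (x `|` y) = low i x `|` low i y /\
                          low i (x `&` y) = low i x `&` low i y) /\
     (* (d) *)
     (forall i (x y : L), up i (x `|` y) = ojoin (up i x) (up i y)) /\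
     (* (e) *)
     (forall i (x y : L),
        ((exists j, omeet (up j x) (up j y) = Some \bot) ->
           up i (x `&` y) = Some \bot) /\
        (~ (exists j, omeet (up j x) (up j y) = Some \bot) ->
           up i (x `&` y) = omeet (up i x) (up i y)))).
Proof.
split=> [i x|]; first by have [g _ [_ gP]] := lower_projection Hcop i; exists (g x).
split=> [i x|low up lowP upP].
  by have [F _ [_ FP]] := upper_projection Hcop; exists (val (F x) i).
have lowH := is_lower_family_hom0 Hcop lowP.
have [F [_ FU FI] [Fe ->]] := is_upper_family_factor Hcop upP.
split=> [i a|]; first by rewrite (lowH i).2 proj_id Fe val_barprod_single_in.
split=> [i j a ne|].
  have ji : j != i :> {classic I} by apply/eqP => ji; subst j; apply: (ne a).
  have a0 : a != \bot.
    apply/eqP => a0; apply: (ne \bot); rewrite a0.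
    by case: (proj1 Hcop i) (proj1 Hcop j) => [-> _ _] [-> _ _].
  by rewrite (lowH i).2 proj_out // Fe val_barprod_single_out.
split=> [i x y|]; first by case: (lowH i) => -[_ -> ->].
split=> [i x y|i x y]; first by rewrite FU val_barprod_join.
rewrite FI val_barprod_meet; split=> [[j xy0]|xy_nz].
  by rewrite (collapse_zero (ex_intro _ j xy0)).
by rewrite collapse_id.
Qed.
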